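(* In every state $\mathbf{x}$ of the common-chunk-protocol Markov process (with $k\ge 2$ chunks and any $\lambda>0$) in which $S\ge 12$, the total download rate satisfies \[ r \;\ge\; \min_{1\le i\le k} \frac{S_i}{2k^3}. \]
   Context: Model: Fix an integer $k\ge 2$ (number of chunks of a file) and $\lambda>0$. There is always exactly one seed holding all $k$ chunks. Non-seed peers arrive according to a Poisson process of rate $\lambda$, each arriving with no chunks; each non-seed peer holds a subset (its profile) of $\{1,\dots,k\}$ and leaves the system immediately once it holds all $k$ chunks. The state $\mathbf{x}$ of the continuous-time Markov process is the number of non-seed peers with each profile. $S$ denotes the total number of peers present, including the seed. Each non-seed peer has an independent rate-1 Poisson clock; at each tick it draws a sample of peers independently and uniformly at random with replacement from the current $S$ peers (seed and itself included) and may instantaneously download at most one chunk that it lacks and that is held by some sampled peer (such a chunk is a ''match''). Counting draws with multiplicity, a chunk is ''rare'' in a sample of 3 draws if exactly one of the 3 draws holds it. Common chunk protocol: (i) a peer with no chunks draws 3 peers and downloads a chunk chosen uniformly among the rare matches, if there is any, otherwise nothing; (ii) a peer holding at least 1 and at most $k-2$ chunks draws 1 peer and downloads a uniformly chosen match, if any, otherwise nothing; (iii) a peer holding exactly $k-1$ chunks draws 3 peers and downloads its missing chunk only if that chunk is held by some draw and every chunk it holds is held by at least 2 of the 3 draws; otherwise nothing. Notation: $S_i$ ($1\le i\le k$) is the number of peers, including the seed, holding chunk $i$. $r=r(\mathbf{x})$ is the total rate of download events in state $\mathbf{x}$, i.e. the sum over all non-seed peers of the probability that a clock tick of that peer results in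 a download. *)

From HB Require Import structures.
From mathcomp Require Import all_boot all_order all_algebra.
Set Implicit Arguments. Unset Strict Implicit. Unset Printing Implicit Defensive.
Import Order.TTheory GRing.Theory Num.Theory.

(* A state of the process: x C = number of non-seed peers with profile C
   (chunks are indexed by 'I_k). *)

(* number of peers with profile A, seed included (the seed has profile setT) *)
Definition npeers (k : nat) (x : {set 'I_k} -> nat) (A : {set 'I_k}) : nat :=
  (x A + (A == setT))%N.

Definition Stot (k : nat) (x : {set 'I_k} -> nat) : nat :=
  (\sum_(A : {set 'I_k}) npeers x A)%N.

Definition Schunk (k : nat) (x : {set 'I_k} -> nat) (i : 'I_k) : nat :=
  (\sum_(A : {set 'I_k} | i \in A) npeers x A)%N.

Definition mult3 (k : nat) (i : 'I_k) (A B D : {set 'I_k}) : nat :=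
  ((i \in A) + (i \in B) + (i \in D))%N.

Definition succ_empty (k : nat) (A B D : {set 'I_k}) : bool :=
  [exists i, mult3 i A B D == 1%N].

Definition succ_last (k : nat) (C : {set 'I_k}) (A B D : {set 'I_k}) : bool :=
  [exists j, (j \notin C) && (j \in A :|: B :|: D)] &&
  [forall i, (i \in C) ==> (1 < mult3 i A B D)%N].

(* probability that a uniform sample of 3 peers (with replacement) satisfies P *)
Definition triple_prob (k : nat) (x : {set 'I_k} -> nat)
    (P : {set 'I_k} -> {set 'I_k} -> {set 'I_k} -> bool) : rat :=
  ((\sum_(A : {set 'I_k}) \sum_(B : {set 'I_k}) \sum_(D : {set 'I_k})
      npeers x A * npeers x B * npeers x D * P A B D)%N)%:R
  / ((Stot x)%:R ^+ 3).

Definition single_prob (k : nat) (x : {set 'I_k} -> nat) (C : {set 'I_k}) : rat :=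
  ((\sum_(A : {set 'I_k} | ~~ (A \subset C)) npeers x A)%N)%:R / (Stot x)%:R.

(* probability that a clock tick of a peer with profile C yields a download *)
Definition dl_prob (k : nat) (x : {set 'I_k} -> nat) (C : {set 'I_k}) : rat :=
  if #|C| == 0%N then triple_prob x (@succ_empty k)
  else if (#|C| <= k - 2)%N then single_prob x C
  else if #|C| == (k - 1)%N then triple_prob x (succ_last C)
  else 0%R.

Definition rate (k : nat) (x : {set 'I_k} -> nat) : rat :=
  \sum_(C : {set 'I_k}) (x C)%:R * dl_prob x C.

From HB Require Import structures.
From mathcomp Require Import all_boot all_order all_algebra.
From mathcomp Require Import zify.
Set Implicit Arguments. Unset Strict Implicit. Unset Printing Implicit Defensive.
Import Order.TTheory GRing.Theory Num.Theory.

(* Let N be the number of non-seed peers (so S = N + 1) and m = min_i S_i.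
   Since no non-seed peer holds every chunk, the non-seed peers split into
   three classes: empty peers (rule (i)), "middle" peers holding between 1 and
   k-2 chunks (rule (ii)) and peers missing exactly one chunk (rule (iii)).
   One class contains a fixed fraction of the N peers:
   - middle peers: each one misses some chunk j, and a single draw holding j
     is a match, so each downloads with probability >= S_j / S >= m / S;
   - empty peers: the sample (empty, empty, holder of i) and its rotations
     make chunk i rare, so each downloads with probability >= 3 n0^2 S_i / S^3;
   - the k profiles missing one chunk: the most populous one, C, with c peers,
     downloads its missing chunk j from the samples (C, C, holder of j) and
     their rotations, with probability >= 3 c^2 S_j / S^3.
   The thresholds used below (7% middle, 31% empty, 62% last of the N peers)
   exhaust all peers, and with S <= 12 N / 11 (as S >= 12) and k >= 2 each
   case yields rate >= m / (2 k^3). *)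

Local Open Scope nat_scope.

Lemma triple_sum_prod (T : finType) (w : T -> nat) (U V W : pred T) :
  \sum_a \sum_b \sum_d w a * w b * w d * (U a && V b && W d) =
  (\sum_(a | U a) w a) * (\sum_(b | V b) w b) * (\sum_(d | W d) w d).
Proof.
rewrite !(big_mkcond U) !(big_mkcond V) !(big_mkcond W) -mulnA big_distrl /=.
apply: eq_bigr => a _; rewrite big_distrl big_distrr /=; apply: eq_bigr => b _.
rewrite !big_distrr /=; apply: eq_bigr => d _.
by case: (U a); case: (V b); case: (W d); rewrite ?muln0 ?mul0n ?muln1 ?mulnA.
Qed.

(* Rotation counting: if Q fails at c and P holds at the three rotations of
   (c, c, d) for every d in Q, these pairwise distinct triples alone give
   P a weighted count of at least 3 w(c)^2 (sum of w over Q). *)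
Lemma triple_sum_rotations (T : finType) (w : T -> nat)
    (P : T -> T -> T -> bool) (c : T) (Q : pred T) :
  ~~ Q c -> (forall d, Q d -> [&& P c c d, P c d c & P d c c]) ->
  3 * (w c * w c * \sum_(d | Q d) w d) <=
  \sum_a \sum_b \sum_d w a * w b * w d * P a b d.
Proof.
move=> /negbTE Qc HP.
pose rot a b d := (a == c) && (b == c) && Q d + ((a == c) && Q b && (d == c))
                  + (Q a && (b == c) && (d == c)).
have rotP a b d : rot a b d <= P a b d.
  rewrite /rot; case: (eqVneq a c) => [->|_]; case: (eqVneq b c) => [->|_];
    case: (eqVneq d c) => [->|_]; rewrite /= ?Qc ?andbF ?andbT ?addn0 //=.
  - by case: (boolP (Q d)) => // /HP /and3P[-> _ _].
  - by case: (boolP (Q b)) => // /HP /and3P[_ -> _].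
  - by case: (boolP (Q a)) => // /HP /and3P[_ _ ->].
apply: leq_trans (_ :
    \sum_a \sum_b \sum_d w a * w b * w d * ((a == c) && (b == c) && Q d)
  + \sum_a \sum_b \sum_d w a * w b * w d * ((a == c) && Q b && (d == c))
  + \sum_a \sum_b \sum_d w a * w b * w d * (Q a && (b == c) && (d == c)) <= _).
  by rewrite !triple_sum_prod !big_pred1_eq; lia.
rewrite -!big_split; apply: leq_sum => a _; rewrite -!big_split; apply: leq_sum => b _.
rewrite -!big_split; apply: leq_sum => d _.
by apply: leq_trans (leq_mul (leqnn _) (rotP a b d)); rewrite /rot !mulnDr.
Qed.

Lemma exists_notin (T : finType) (C : {set T}) :
  #|C| < #|T| -> exists j, j \notin C.
Proof.
move=> hC; have /card_gt0P [j] : 0 < #|~: C| by move: hC; rewrite -(cardsC C); lia.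
by rewrite inE; exists j.
Qed.

Lemma cube_scale a b s t : a * s <= b * t -> a ^ 3 * s ^ 3 <= b ^ 3 * t ^ 3.
Proof. by move=> h; rewrite -!expnMn leq_exp2r. Qed.

Lemma ratio_le (a b c d : nat) : 0 < b -> 0 < d -> a * d <= c * b ->
  (a%:R / b%:R <= c%:R / d%:R :> rat)%R.
Proof.
move=> hb hd h; rewrite ler_pdivrMr ?ltr0n // mulrAC ler_pdivlMr ?ltr0n //.
by rewrite -!natrM ler_nat.
Qed.

(* Final arithmetic of the two cubic cases: a class of c peers downloading
   with probability >= 3 c^2 sigma / S^3, sigma >= m, gives rate >= m/(2k^3)
   as soon as S^3 <= 6 (k c)^3. *)
Lemma cubic_rate_bound (k c m sigma s : nat) :
  0 < k -> 0 < s -> m <= sigma -> s ^ 3 <= 6 * (k * c) ^ 3 ->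
  (m%:R / (2 * k ^ 3)%:R <= (c * (3 * (c * c * sigma)))%:R / (s ^ 3)%:R :> rat)%R.
Proof.
move=> k0 s0 hm hs; rewrite ratio_le ?expn_gt0 ?muln_gt0 ?k0 ?s0 //.
apply: (@leq_trans (m * (6 * (k * c) ^ 3))); first by rewrite leq_mul2l hs orbT.
have -> : c * (3 * (c * c * sigma)) * (2 * k ^ 3) = sigma * (6 * (k * c) ^ 3).
  by rewrite expnMn !expnS expn0; lia.
by rewrite leq_mul2r hm orbT.
Qed.

Section DownloadRate.

Variable k : nat.
Hypothesis hk : 2 <= k.
Variable x : {set 'I_k} -> nat.

Let k_gt0 : 0 < k. Proof. exact: leq_trans hk. Qed.

Definition middle_profile (C : {set 'I_k}) : bool := (0 < #|C|) && (#|C| <= k - 2).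
Definition last_profile (C : {set 'I_k}) : bool := #|C| == k - 1.

Definition nonseed : nat := \sum_A x A.
Definition middle_count : nat := \sum_(C | middle_profile C) x C.
Definition last_count : nat := \sum_(C | last_profile C) x C.

Lemma Stot_nonseed : Stot x = nonseed + 1.
Proof.
rewrite /Stot /npeers big_split /=; congr (_ + _).
by rewrite (bigD1 setT) //= eqxx big1 // => A /negbTE ->.
Qed.

Lemma nonseed_split : x setT = 0 ->
  nonseed <= x set0 + middle_count + last_count.
Proof.
move=> hfull; rewrite -(big_pred1_eq addn set0 x) /nonseed /middle_count /last_count.
rewrite (big_mkcond (pred1 set0)) (big_mkcond middle_profile) (big_mkcond last_profile) -!big_split /=.
apply: leq_sum => C _; case: eqP => [_|/eqP C0]; first lia.
case hm: (middle_profile C); first lia; case hl: (last_profile C); first lia.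
suff -> : C = setT by rewrite hfull.
have c0 : 0 < #|C| by rewrite card_gt0.
have ck : #|C| <= k by rewrite -[X in _ <= X](card_ord k) max_card.
move: hm hl; rewrite /middle_profile /last_profile c0 /= => /negbT hm /negbT hl.
by apply/eqP; rewrite eqEcard subsetT cardsT card_ord /=; lia.
Qed.

Lemma last_profile_max : exists2 C : {set 'I_k}, #|C| = k - 1 & last_count <= k * x C.
Proof.
pose L := [set C : {set 'I_k} | #|C| == k - 1].
have cL : #|L| = k by rewrite card_draws card_ord bin_sub // bin1.
have L0 : 0 < #|L| by rewrite cL.
have [C CL Cmax] := eq_bigmax_cond x L0.
exists C; first by move: CL; rewrite inE => /eqP.
have -> : last_count = \sum_(D in L) x D.
  by apply: eq_bigl => D; rewrite inE.
rewrite -[in k * _]cL -sum_nat_const; apply: leq_sum => D DL.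
by rewrite -Cmax leq_bigmax_cond.
Qed.

Lemma npeers_nonfull (C : {set 'I_k}) : C != setT -> npeers x C = x C.
Proof. by rewrite /npeers => /negbTE ->; rewrite addn0. Qed.

(* Rule (ii): any single draw holding a missing chunk j is a match. *)
Lemma single_prob_ge (C : {set 'I_k}) (j : 'I_k) : j \notin C ->
  ((Schunk x j)%:R / (Stot x)%:R <= single_prob x C)%R.
Proof.
move=> jC; rewrite ler_wpM2r ?invr_ge0 // ler_nat /Schunk.
rewrite big_mkcond [X in _ <= X]big_mkcond /=; apply: leq_sum => A _.
by case: ifP => // jA; case: subsetP => // /(_ j jA); rewrite (negbTE jC).
Qed.

Lemma empty_rotations (i : 'I_k) (D : {set 'I_k}) : i \in D ->
  [&& succ_empty set0 set0 D, succ_empty set0 D set0 & succ_empty D set0 set0].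
Proof.
by move=> iD; apply/and3P; split; apply/existsP; exists i; rewrite /mult3 iD inE.
Qed.

Lemma last_rotations (C D : {set 'I_k}) (j : 'I_k) : j \notin C -> j \in D ->
  [&& succ_last C C C D, succ_last C C D C & succ_last C D C C].
Proof.
move=> jC jD.
have held : [forall i, (i \in C) ==> (1 < (i \in C) + (i \in C) + (i \in D))].
  by apply/forallP => i; apply/implyP => ->.
have miss E : j \in E -> [exists j', (j' \notin C) && (j' \in E)].
  by move=> jE; apply/existsP; exists j; rewrite jC.
apply/and3P; split; apply/andP; split; first [apply: miss; by rewrite !inE jD ?orbT
  | move: held; apply: contraTT => /forallPn [i]; rewrite negb_imply => /andP [iC];
    by rewrite /mult3 iC; case: (i \in D)].
Qed.

Lemma triple_prob_rotations (P : {set 'I_k} -> {set 'I_k} -> {set 'I_k} -> bool)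
    (C : {set 'I_k}) (Q : pred {set 'I_k}) :
  C != setT -> ~~ Q C -> (forall D, Q D -> [&& P C C D, P C D C & P D C C]) ->
  ((3 * (x C * x C * \sum_(D | Q D) npeers x D))%:R / (Stot x ^ 3)%:R
    <= triple_prob x P)%R.
Proof.
move=> CT QC HP; rewrite /triple_prob -natrX ler_wpM2r ?invr_ge0 // ler_nat.
by rewrite -npeers_nonfull //; apply: triple_sum_rotations.
Qed.

Lemma dl_prob_ge0 (C : {set 'I_k}) : (0 <= dl_prob x C)%R.
Proof.
rewrite /dl_prob /triple_prob /single_prob.
by repeat case: ifP => _; rewrite ?divr_ge0 ?exprn_ge0 ?ler0n.
Qed.

Lemma rate_ge_part (R : pred {set 'I_k}) :
  (\sum_(C | R C) (x C)%:R * dl_prob x C <= rate x)%R.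
Proof.
rewrite /rate [X in (_ <= X)%R](bigID R) /= lerDl; apply: sumr_ge0 => C _.
by rewrite mulr_ge0 ?ler0n ?dl_prob_ge0.
Qed.

Lemma rate_ge_profile (C : {set 'I_k}) : ((x C)%:R * dl_prob x C <= rate x)%R.
Proof. by apply: le_trans (rate_ge_part (pred1 C)); rewrite big_pred1_eq. Qed.

Lemma rate_ge_rotations (P : {set 'I_k} -> {set 'I_k} -> {set 'I_k} -> bool)
    (C : {set 'I_k}) (Q : pred {set 'I_k}) :
  dl_prob x C = triple_prob x P ->
  C != setT -> ~~ Q C -> (forall D, Q D -> [&& P C C D, P C D C & P D C C]) ->
  ((x C * (3 * (x C * x C * \sum_(D | Q D) npeers x D)))%:R / (Stot x ^ 3)%:R
    <= rate x)%R.
Proof.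
move=> hdl CT QC HP; apply: le_trans (rate_ge_profile C).
by rewrite natrM -mulrA ler_wpM2l // hdl triple_prob_rotations.
Qed.

Variable m : nat.
Hypothesis hm : forall j, m <= Schunk x j.
Hypothesis hN : 11 <= nonseed.

Lemma rate_middle_case : 7 * nonseed <= 100 * middle_count ->
  (m%:R / (2 * k ^ 3)%:R <= rate x)%R.
Proof.
move=> hmid; have lb : (middle_count%:R * (m%:R / (Stot x)%:R) <= rate x)%R.
  apply: le_trans (rate_ge_part middle_profile).
  rewrite /middle_count natr_sum mulr_suml; apply: ler_sum => C /andP [c0 c2].
  rewrite ler_wpM2l // /dl_prob eqn0Ngt c0 c2 /=.
  have [j jC] := @exists_notin _ C (ltac:(rewrite card_ord; lia)).
  apply: le_trans (single_prob_ge jC); rewrite ler_wpM2r ?invr_ge0 // ler_nat.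
  exact: hm.
apply: le_trans lb; rewrite mulrA -natrM ratio_le ?Stot_nonseed ?addn1 //.
  by rewrite muln_gt0 expn_gt0 k_gt0.
have hk3 : 16 <= 2 * k ^ 3 by rewrite (_ : 16 = 2 * 2 ^ 3) // leq_mul2l leq_exp2r.
rewrite [middle_count * m]mulnC -mulnA leq_mul2l; apply/orP; right.
by apply: (@leq_trans (middle_count * 16)); [lia | rewrite leq_mul2l hk3 orbT].
Qed.

Lemma rate_empty_case : 31 * nonseed <= 100 * x set0 ->
  (m%:R / (2 * k ^ 3)%:R <= rate x)%R.
Proof.
move=> hemp; set i : 'I_k := Ordinal k_gt0.
have empty_nonfull : (set0 : {set 'I_k}) != setT.
  by apply/eqP => /setP /(_ i); rewrite !inE.
apply: le_trans (rate_ge_rotations (Q := fun D => i \in D) _ empty_nonfull _ _).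
- rewrite cubic_rate_bound ?Stot_nonseed ?addn1 //; first exact: hm.
  have := @cube_scale 341 1200 nonseed.+1 (x set0) (ltac:(lia)).
  have hk3 : 8 <= k ^ 3 by rewrite (_ : 8 = 2 ^ 3) // leq_exp2r.
  have : 48 * x set0 ^ 3 <= 6 * (k * x set0) ^ 3.
    by rewrite expnMn mulnA leq_mul2r; apply/orP; right; lia.
  lia.
- by rewrite /dl_prob cards0.
- by rewrite inE.
- exact: empty_rotations.
Qed.

Lemma rate_last_case : 62 * nonseed < 100 * last_count ->
  (m%:R / (2 * k ^ 3)%:R <= rate x)%R.
Proof.
move=> hlast; have [C Ck Cmax] := last_profile_max.
have [j jC] := @exists_notin _ C (ltac:(rewrite Ck card_ord; lia)).
have C_nonfull : C != setT by apply: contraNneq jC => ->; rewrite inE.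
apply: le_trans (rate_ge_rotations (Q := fun D => j \in D) _ C_nonfull jC _).
- rewrite cubic_rate_bound ?Stot_nonseed ?addn1 //; first exact: hm.
  have := @cube_scale 682 1200 nonseed.+1 (k * x C) (ltac:(lia)); lia.
- rewrite /dl_prob Ck ifF; last by apply: negbTE; lia.
  by rewrite ifF ?eqxx //; apply: negbTE; lia.
- by move=> D; apply: last_rotations.
Qed.

End DownloadRate.

Theorem lemma2 (k : nat) (lambda : rat) (hk : (2 <= k)%N) (hlambda : (0 < lambda)%R)
  (x : {set 'I_k} -> nat) (hfull : x [set: 'I_k] = 0%N)
  (hS : (12 <= Stot x)%N) :
  exists i : 'I_k,
    ((Schunk x i)%:R / (2 * k ^ 3)%N%:R <= rate x)%R.
Proof.
have [i _ imin] := @arg_minnP _ (Ordinal (leq_trans (isT : 0 < 2) hk)) xpredT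
  (Schunk x) isT.
exists i; have hm j : Schunk x i <= Schunk x j by apply: imin.
have hN : 11 <= nonseed x by move: hS; rewrite Stot_nonseed; lia.
have hsplit := nonseed_split hk hfull.
have [hmid|hmid] := leqP (7 * nonseed x) (100 * middle_count x).
  exact: (rate_middle_case hk hm hN).
have [hemp|hemp] := leqP (31 * nonseed x) (100 * x set0).
  exact: (rate_empty_case hk hm hN).
by apply: (rate_last_case hk hm hN); lia.
Qed.
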